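(* Let $p>2$ be an even integer such that $p/2$ is odd. Then there exists a subset $\mathcal{X}$ of $\mathbb{P}^2_\circ$ with $|\mathcal{X}|=|B(2,p-1)\cap\mathbb{P}^2_\circ|+1$ and $$\kappa(\mathcal{X})\le\kappa(B(2,p-1)\cap\mathbb{P}^2_\circ)+\frac{p}{2}+1.$$ Moreover, every subset $\mathcal{X}$ of $\mathbb{P}^2_\circ$ with these two properties satisfies at least one of: (i) some point of $B(2,p-1)\cap\mathbb{P}^2_\circ$ is not in $\mathcal{X}$; (ii) some point of $\mathcal{X}$ is not in $B(2,p)\cap\mathbb{P}^2_\circ$.
   Context: A point of $\mathbb{Z}^2$ is primitive if its coordinates are relatively prime; $\mathbb{P}^2_\circ$ denotes the set of primitive points of $\mathbb{Z}^2$ whose first non-zero coordinate is positive. $B(2,p)=\{x\in\mathbb{R}^2:\|x\|_1\le p\}$. For a finite $\mathcal{X}\subset\mathbb{R}^2$, $\kappa(\mathcal{X})=\max_{i\in\{1,2\}}\sum_{x\in\mathcal{X}}|x_i|$. *)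

(* integer points as Z * Z, finite sets as duplicate-free lists. *)
From Stdlib Require Import ZArith List Bool.
Import ListNotations.
Open Scope Z_scope.
Open Scope bool_scope.

Definition in_P2o (x : Z * Z) : Prop :=
  Z.gcd (fst x) (snd x) = 1 /\
  (0 < fst x \/ (fst x = 0 /\ 0 < snd x)).

Definition in_P2o_b (x : Z * Z) : bool :=
  (Z.gcd (fst x) (snd x) =? 1) &&
  ((0 <? fst x) || ((fst x =? 0) && (0 <? snd x))).

Definition in_ball (p : Z) (x : Z * Z) : Prop := Z.abs (fst x) + Z.abs (snd x) <= p.

Definition range (p : Z) : list Z :=
  map (fun n => Z.of_nat n - p) (seq 0 (Z.to_nat (2 * p + 1))).

Definition ballP (p : Z) : list (Z * Z) :=
  filter (fun x => in_P2o_b x && (Z.abs (fst x) + Z.abs (snd x) <=? p))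
         (list_prod (range p) (range p)).

Definition kappa (X : list (Z * Z)) : Z :=
  Z.max (fold_right Z.add 0 (map (fun x => Z.abs (fst x)) X))
        (fold_right Z.add 0 (map (fun x => Z.abs (snd x)) X)).

(** The primitive points of [B(2,p-1)] are permuted by the involution
    [(a,b) |-> ±(b,a)], so both coordinate sums of this set equal the same [S].
    For the first claim, trade [(p/2-1, p/2)] for [(1,p-1)] and [(p-1,1)].
    For the second, a set [X] with [B(2,p-1) ∩ P^2_o ⊆ X ⊆ B(2,p) ∩ P^2_o] of the
    given size adds a single primitive [(a,b)] with [|a|+|b| = p], so
    [κ(X) = S + max(|a|,|b|)].  Writing [p = 2m] with [m] odd, the only splittings
    of [2m] into parts at most [m+1] are [m+m] and [(m-1)+(m+1)], whose parts share
    the factor [m], resp. [2]; hence [max(|a|,|b|) >= m+2]. *)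

From Stdlib Require Import ZArith List Permutation Lia Classical.
Open Scope Z_scope.

Lemma NoDup_list_prod {A B : Type} (l1 : list A) (l2 : list B) :
  NoDup l1 -> NoDup l2 -> NoDup (list_prod l1 l2).
Proof.
  induction 1 as [|a l1 a_l1 _ IH]; intros Hl2; simpl; [constructor|].
  apply NoDup_app; auto.
  - apply FinFun.Injective_map_NoDup; auto.
    intros y y' E; injection E; auto.
  - intros [x y] Hmap Hprod.
    apply in_map_iff in Hmap as [y' [E _]]; injection E as <- _.
    apply in_prod_iff in Hprod as [Ha _]; contradiction.
Qed.

Lemma NoDup_range q : NoDup (range q).
Proof.
  apply FinFun.Injective_map_NoDup; [|apply seq_NoDup].
  intros n n' E; lia.
Qed.

Lemma in_range q z : - q <= z <= q -> In z (range q).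
Proof.
  intros Hz; apply in_map_iff; exists (Z.to_nat (z + q)).
  split; [lia|]; apply in_seq; lia.
Qed.

Lemma in_P2o_bP x : in_P2o_b x = true <-> in_P2o x.
Proof.
  unfold in_P2o_b, in_P2o.
  rewrite Bool.andb_true_iff, Bool.orb_true_iff, Bool.andb_true_iff, !Z.eqb_eq, !Z.ltb_lt.
  tauto.
Qed.

Lemma In_ballP q x : In x (ballP q) <-> in_P2o x /\ in_ball q x.
Proof.
  unfold ballP, in_ball.
  rewrite filter_In, Bool.andb_true_iff, in_P2o_bP, Z.leb_le.
  destruct x as [a b]; rewrite in_prod_iff; simpl.
  split; [tauto|].
  intros [HP HB]; split; [split; apply in_range; lia | auto].
Qed.

Lemma NoDup_ballP q : NoDup (ballP q).
Proof. apply NoDup_filter, NoDup_list_prod; apply NoDup_range. Qed.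

Definition sum_map (f : Z * Z -> Z) (X : list (Z * Z)) : Z :=
  fold_right Z.add 0 (map f X).

Definition abs_fst (x : Z * Z) : Z := Z.abs (fst x).
Definition abs_snd (x : Z * Z) : Z := Z.abs (snd x).

Lemma kappaE X : kappa X = Z.max (sum_map abs_fst X) (sum_map abs_snd X).
Proof. reflexivity. Qed.

Lemma sum_map_cons f x X : sum_map f (x :: X) = f x + sum_map f X.
Proof. reflexivity. Qed.

Lemma sum_map_perm f X Y : Permutation X Y -> sum_map f X = sum_map f Y.
Proof. unfold sum_map; induction 1; simpl; lia. Qed.

Lemma sum_map_comp f g X : sum_map f (map g X) = sum_map (fun x => f (g x)) X.
Proof. unfold sum_map; now rewrite map_map. Qed.

Lemma sum_map_ext f g X : (forall x, f x = g x) -> sum_map f X = sum_map g X.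
Proof. intros E; unfold sum_map; now rewrite (map_ext f g E). Qed.

Lemma kappa_perm X Y : Permutation X Y -> kappa X = kappa Y.
Proof. intros P; rewrite !kappaE, !(sum_map_perm _ _ _ P); reflexivity. Qed.

Definition swap_P2o (x : Z * Z) : Z * Z :=
  if snd x <? 0 then (- snd x, - fst x) else (snd x, fst x).

Lemma abs_fst_swap_P2o x : abs_fst (swap_P2o x) = abs_snd x.
Proof.
  unfold swap_P2o, abs_fst, abs_snd; destruct (snd x <? 0); simpl; lia.
Qed.

Lemma in_ball_swap_P2o q x : in_ball q x -> in_ball q (swap_P2o x).
Proof.
  unfold in_ball, swap_P2o; destruct (snd x <? 0); simpl; lia.
Qed.

Lemma in_P2o_swap_P2o x : in_P2o x -> in_P2o (swap_P2o x).
Proof.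
  destruct x as [a b]; unfold in_P2o, swap_P2o; simpl; intros [G S].
  destruct (Z.ltb_spec b 0); simpl; split; try lia.
  - now rewrite Z.gcd_opp_l, Z.gcd_opp_r, Z.gcd_comm.
  - now rewrite Z.gcd_comm.
Qed.

Lemma swap_P2oK x : in_P2o x -> swap_P2o (swap_P2o x) = x.
Proof.
  destruct x as [a b]; unfold in_P2o, swap_P2o; simpl; intros [_ S].
  destruct (Z.ltb_spec b 0); simpl.
  - destruct (Z.ltb_spec (- a) 0); [f_equal|]; lia.
  - destruct (Z.ltb_spec a 0); [lia|reflexivity].
Qed.

Lemma Permutation_ballP_swap q : Permutation (ballP q) (map swap_P2o (ballP q)).
Proof.
  apply NoDup_Permutation_bis; [apply NoDup_ballP | now rewrite length_map |].
  intros x Hx; apply In_ballP in Hx as [HP HB].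
  apply in_map_iff; exists (swap_P2o x); split; [now apply swap_P2oK|].
  apply In_ballP; split; [now apply in_P2o_swap_P2o | now apply in_ball_swap_P2o].
Qed.

Lemma sum_abs_fst_ballP q : sum_map abs_fst (ballP q) = sum_map abs_snd (ballP q).
Proof.
  rewrite (sum_map_perm _ _ _ (Permutation_ballP_swap q)), sum_map_comp.
  apply sum_map_ext, abs_fst_swap_P2o.
Qed.

Lemma kappa_cons_ballP q a b :
  kappa ((a, b) :: ballP q) = kappa (ballP q) + Z.max (Z.abs a) (Z.abs b).
Proof.
  rewrite !kappaE, !sum_map_cons, <- sum_abs_fst_ballP.
  unfold abs_fst, abs_snd; simpl; lia.
Qed.

Lemma Permutation_cons_of_In {A : Type} (z : A) (l : list A) :
  In z l -> exists l', Permutation l (z :: l').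
Proof.
  intros Hz; destruct (in_split _ _ Hz) as [l1 [l2 ->]].
  exists (l1 ++ l2); apply Permutation_sym, Permutation_middle.
Qed.

Lemma Permutation_cons_of_incl_length {A : Type} (B X : list A) :
  NoDup B -> NoDup X -> incl B X -> length X = S (length B) ->
  exists x, ~ In x B /\ Permutation X (x :: B).
Proof.
  intros HB HX HBX Hlen.
  destruct (classic (incl X B)) as [HXB | HXB].
  { pose proof (NoDup_incl_length HX HXB); lia. }
  apply not_all_ex_not in HXB as [x Hx]; apply imply_to_and in Hx as [Hx HxB].
  exists x; split; [exact HxB|].
  apply Permutation_sym, NoDup_Permutation_bis; [now constructor | simpl; lia |].
  intros y [<- | Hy]; auto.
Qed.

Lemma gcd_neq1_of_common_divisor d u v :
  1 < d -> (d | u) -> (d | v) -> Z.gcd u v <> 1.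
Proof.
  intros Hd Hu Hv G.
  pose proof (Z.gcd_greatest u v d Hu Hv) as H; rewrite G in H.
  apply Z.divide_1_r in H; lia.
Qed.

Lemma coprime_l1_max_abs_ge a b m :
  Z.gcd a b = 1 -> Z.Odd m -> 1 < m -> Z.abs a + Z.abs b = 2 * m ->
  m + 2 <= Z.max (Z.abs a) (Z.abs b).
Proof.
  rewrite <- Z.gcd_abs_l, <- Z.gcd_abs_r.
  intros G Hodd Hm Hsum.
  destruct (Z.le_gt_cases (m + 2) (Z.max (Z.abs a) (Z.abs b))) as [Hge | Hmax];
    [exact Hge | exfalso].
  destruct Hodd as [j ->].
  assert (Z.abs a = 2 * j + 1 /\ Z.abs b = 2 * j + 1 \/
          Z.abs a = 2 * j /\ Z.abs b = 2 * j + 2 \/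
          Z.abs a = 2 * j + 2 /\ Z.abs b = 2 * j)
    as [[Ea Eb] | [[Ea Eb] | [Ea Eb]]] by lia;
    rewrite Ea, Eb in G; revert G.
  - apply (gcd_neq1_of_common_divisor (2 * j + 1)); auto using Z.divide_refl.
  - apply (gcd_neq1_of_common_divisor 2); [lia | exists j | exists (j + 1)]; lia.
  - apply (gcd_neq1_of_common_divisor 2); [lia | exists (j + 1) | exists j]; lia.
Qed.

Lemma ballP_extension_exists m : 2 <= m ->
  exists X, NoDup X /\ (forall x, In x X -> in_P2o x) /\
    length X = S (length (ballP (2 * m - 1))) /\
    kappa X <= kappa (ballP (2 * m - 1)) + m + 1.
Proof.
  intros Hm.
  assert (Hz : In (m - 1, m) (ballP (2 * m - 1))).
  { apply In_ballP; unfold in_P2o, in_ball; cbn [fst snd]; split; [split|]; try lia.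
    apply Z.bezout_1_gcd; exists (-1), 1; lia. }
  destruct (Permutation_cons_of_In _ _ Hz) as [l Hl].
  assert (Hl_ball : forall x, In x l -> in_P2o x /\ in_ball (2 * m - 1) x).
  { intros x Hx; apply In_ballP, (Permutation_in _ (Permutation_sym Hl)); now right. }
  assert (Hl_nodup : NoDup l).
  { apply (NoDup_cons_iff (m - 1, m)), (Permutation_NoDup Hl), NoDup_ballP. }
  assert (Hl_far : forall a b, Z.abs a + Z.abs b = 2 * m -> ~ In (a, b) l).
  { intros a b Hab Hin; apply Hl_ball in Hin as [_ Hin].
    unfold in_ball in Hin; cbn [fst snd] in Hin; lia. }
  exists ((1, 2 * m - 1) :: (2 * m - 1, 1) :: l); split; [|split; [|split]].
  - constructor; [|constructor]; auto.
    + intros [E | Hin]; [apply pair_equal_spec in E; lia | revert Hin; apply Hl_far; lia].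
    + apply Hl_far; lia.
  - intros x [<- | [<- | Hx]]; unfold in_P2o; cbn [fst snd].
    + split; [apply Z.gcd_1_l | lia].
    + split; [apply Z.gcd_1_r | lia].
    + now apply Hl_ball.
  - rewrite (Permutation_length Hl); reflexivity.
  - rewrite (kappa_perm _ _ Hl), !kappaE, !sum_map_cons.
    unfold abs_fst, abs_snd; cbn [fst snd map fold_right]; lia.
Qed.

Lemma kappa_ballP_extension_gt m X :
  Z.Odd m -> 1 < m -> NoDup X -> incl (ballP (2 * m - 1)) X ->
  (forall x, In x X -> in_P2o x /\ in_ball (2 * m) x) ->
  length X = S (length (ballP (2 * m - 1))) ->
  kappa (ballP (2 * m - 1)) + m + 1 < kappa X.
Proof.
  intros Hodd Hm HX HBX HX_ball Hlen.
  destruct (Permutation_cons_of_incl_length _ _ (NoDup_ballP _) HX HBX Hlen)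
    as [[a b] [Hnew HP]].
  assert (Hx : In (a, b) X) by (apply (Permutation_in _ (Permutation_sym HP)); now left).
  destruct (HX_ball _ Hx) as [HP2o Hball].
  assert (Hsum : Z.abs a + Z.abs b = 2 * m).
  { assert (~ in_ball (2 * m - 1) (a, b)) by (intros Hb; apply Hnew, In_ballP; auto).
    unfold in_ball in *; cbn [fst snd] in *; lia. }
  rewrite (kappa_perm _ _ HP), kappa_cons_ballP.
  pose proof (coprime_l1_max_abs_ge a b m (proj1 HP2o) Hodd Hm Hsum); lia.
Qed.

Theorem proposition5p2 (p : Z) :
  2 < p -> Z.Even p -> Z.Odd (p / 2) ->
  (exists X : list (Z * Z),
      NoDup X /\ (forall x, In x X -> in_P2o x) /\
      Z.of_nat (length X) = Z.of_nat (length (ballP (p - 1))) + 1 /\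
      kappa X <= kappa (ballP (p - 1)) + p / 2 + 1) /\
  (forall X : list (Z * Z),
      NoDup X -> (forall x, In x X -> in_P2o x) ->
      Z.of_nat (length X) = Z.of_nat (length (ballP (p - 1))) + 1 ->
      kappa X <= kappa (ballP (p - 1)) + p / 2 + 1 ->
      (exists y, in_P2o y /\ in_ball (p - 1) y /\ ~ In y X) \/
      (exists x, In x X /\ ~ (in_P2o x /\ in_ball p x))).
Proof.
  intros Hp [m ->] Hodd.
  assert (Hhalf : 2 * m / 2 = m) by (rewrite Z.mul_comm; apply Z.div_mul; lia).
  rewrite Hhalf in *.
  split.
  - destruct (ballP_extension_exists m) as [X (HX & HX_P2o & Hlen & Hk)]; [lia|].
    exists X; split; [|split; [|split]]; auto; lia.
  - intros X HX _ Hlen Hk.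
    apply NNPP; intros Hneither; apply not_or_and in Hneither as [Hmissing Hout].
    assert (HBX : incl (ballP (2 * m - 1)) X).
    { intros y Hy; apply In_ballP in Hy as [Hy_P2o Hy_ball].
      apply NNPP; intros Hn; apply Hmissing; eauto. }
    assert (HX_ball : forall x, In x X -> in_P2o x /\ in_ball (2 * m) x).
    { intros x Hx; apply NNPP; intros Hn; apply Hout; eauto. }
    pose proof (kappa_ballP_extension_gt m X Hodd ltac:(lia) HX HBX HX_ball ltac:(lia)).
    lia.
Qed.
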